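(* For any number $c$ with $0<c<\min\{k_1|L_0|^2/2,\ k_2(\mu-|A_0|)^2/2\}$, the set of all critical points of $V$ in $V^{-1}([0,c])$ equals $V^{-1}(0)=\{(x,v)\in\mathbb R^3_0\times\mathbb R^3: L(x,v)=L_0,\ A(x,v)=A_0\}$.
   Context: $\mathbb R^3_0=\mathbb R^3\setminus\{0\}$, $\mu>0$. $L(x,v)=x\times v$ and $A(x,v)=v\times(x\times v)-\mu x/|x|$. Fix $L_0,A_0\in\mathbb R^3$ with $L_0\perp A_0$, $L_0\ne0$, $|A_0|<\mu$. With $k_1,k_2>0$, $V(x,v)=\tfrac{k_1}{2}|L(x,v)-L_0|^2+\tfrac{k_2}{2}|A(x,v)-A_0|^2$ on $\mathbb R^3_0\times\mathbb R^3$. *)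

From Stdlib Require Import Reals.
Open Scope R_scope.

Record vec3 := mkV { v1 : R ; v2 : R ; v3 : R }.

Definition vadd (a b : vec3) : vec3 := mkV (v1 a + v1 b) (v2 a + v2 b) (v3 a + v3 b).
Definition vsub (a b : vec3) : vec3 := mkV (v1 a - v1 b) (v2 a - v2 b) (v3 a - v3 b).
Definition vscale (k : R) (a : vec3) : vec3 := mkV (k * v1 a) (k * v2 a) (k * v3 a).
Definition vzero : vec3 := mkV 0 0 0.
Definition dot (a b : vec3) : R := v1 a * v1 b + v2 a * v2 b + v3 a * v3 b.
Definition vnorm (a : vec3) : R := sqrt (dot a a).
Definition cross (a b : vec3) : vec3 :=
  mkV (v2 a * v3 b - v3 a * v2 b)
      (v3 a * v1 b - v1 a * v3 b)
      (v1 a * v2 b - v2 a * v1 b).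

Definition Lmom (x v : vec3) : vec3 := cross x v.

Definition Alrl (mu : R) (x v : vec3) : vec3 :=
  vsub (cross v (cross x v)) (vscale (mu / vnorm x) x).

Definition Vfun (mu k1 k2 : R) (L0 A0 : vec3) (x v : vec3) : R :=
  k1 / 2 * (vnorm (vsub (Lmom x v) L0)) ^ 2
  + k2 / 2 * (vnorm (vsub (Alrl mu x v) A0)) ^ 2.

(* A function on R^3_0 x R^3 seen as a function of the 6 real coordinates
   (x1,x2,x3,v1,v2,v3). *)
Definition coords6 (F : vec3 -> vec3 -> R) (p : nat -> R) : R :=
  F (mkV (p 0%nat) (p 1%nat) (p 2%nat)) (mkV (p 3%nat) (p 4%nat) (p 5%nat)).

Definition pt6 (x v : vec3) (i : nat) : R :=
  match i with
  | 0%nat => v1 x | 1%nat => v2 x | 2%nat => v3 x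
  | 3%nat => v1 v | 4%nat => v2 v | _ => v3 v
  end.

Definition upd (p : nat -> R) (i : nat) (t : R) : nat -> R :=
  fun j => if Nat.eqb j i then t else p j.

Definition critical_point (F : vec3 -> vec3 -> R) (x v : vec3) : Prop :=
  forall i : nat, (i < 6)%nat ->
    derivable_pt_lim (fun t => coords6 F (upd (pt6 x v) i t)) (pt6 x v i) 0.

(* Write a := k1 (L - L0) and b := k2 (A - A0), so that dV = a.dL + b.dA.  At a critical
   point with L <> 0 the six gradient equations force b = l L and a = l A for a single real l:
   b is orthogonal to x and v, and a - l A has vanishing cross products with x and v.
   Since L.A = 0 identically, expanding k1 k2 (L0.A0) = (k1 L - l A).(k2 A - l L) gives
   0 = - l (k1 |L|^2 + k2 |A|^2), so l = 0, i.e. L = L0 and A = A0.  The sublevel bound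
   V <= c < k1 |L0|^2 / 2 is used only to exclude L = 0. *)

From Stdlib Require Import Reals Lra Lia.
From Coquelicot Require Import Coquelicot.
Open Scope R_scope.

Ltac vring := repeat match goal with v : vec3 |- _ => destruct v end;
  unfold dot, cross, vadd, vsub, vscale, vzero; simpl; try (f_equal; ring); try ring.

Lemma dot_ge0 a : 0 <= dot a a.
Proof. destruct a; unfold dot; simpl; nra. Qed.

Lemma dot_eq0 a : dot a a = 0 -> a = vzero.
Proof. destruct a; unfold dot, vzero; simpl; intro; f_equal; nra. Qed.

Lemma dot_gt0 a : a <> vzero -> 0 < dot a a.
Proof. intro Ha. destruct (dot_ge0 a) as [|H]; [assumption|]. now elim Ha; apply dot_eq0. Qed.

Lemma vsub_eq0 a b : vsub a b = vzero -> a = b.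
Proof. destruct a, b; unfold vsub, vzero; intro H; injection H; intros; f_equal; lra. Qed.

Lemma vscale_eq0 k a : vscale k a = vzero -> k <> 0 -> a = vzero.
Proof. destruct a; unfold vscale, vzero; intros H Hk; injection H; intros; f_equal; nra. Qed.

Lemma vscale_inv k a : k <> 0 -> vscale (/ k) (vscale k a) = a.
Proof. destruct a; unfold vscale; simpl; intro; f_equal; field; assumption. Qed.

(* Both lemmas below rest on |L|^2 d = (d.L) L + L x (d x L) for L = cross x v. *)
Lemma cross_eq0_indep d x v :
  cross d x = vzero -> cross d v = vzero -> cross x v <> vzero -> d = vzero.
Proof.
  intros Hx Hv HL.
  set (L := cross x v) in *.
  assert (Hd : vscale (dot L L) d =
    vadd (vscale (dot (cross d x) v) L) (cross L (vsub (cross x (cross d v)) (cross v (cross d x)))))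
    by (unfold L; vring).
  rewrite Hx, Hv in Hd.
  apply (vscale_eq0 (dot L L)); [rewrite Hd; vring|].
  apply Rgt_not_eq, dot_gt0, HL.
Qed.

Lemma perp_parallel_cross b x v :
  dot b x = 0 -> dot b v = 0 -> cross x v <> vzero -> exists l, b = vscale l (cross x v).
Proof.
  intros Hx Hv HL.
  set (L := cross x v) in *.
  assert (Hb : vscale (dot L L) b =
    vadd (vscale (dot L b) L) (cross L (vsub (vscale (dot b v) x) (vscale (dot b x) v))))
    by (unfold L; vring).
  rewrite Hx, Hv in Hb.
  pose proof (dot_gt0 _ HL) as HLL.
  exists (dot L b / dot L L).
  transitivity (vscale (/ dot L L) (vscale (dot L L) b)); [symmetry; apply vscale_inv; lra|].
  rewrite Hb. unfold Rdiv. vring.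
Qed.

Lemma cramer2_eq0 p q r u w :
  p * u - q * w = 0 -> q * u - r * w = 0 -> p * r - q * q <> 0 -> u = 0 /\ w = 0.
Proof.
  intros H1 H2 Hdet.
  assert (Hu : u * (p * r - q * q) = r * (p * u - q * w) - q * (q * u - r * w)) by ring.
  assert (Hw : w * (p * r - q * q) = q * (p * u - q * w) - p * (q * u - r * w)) by ring.
  rewrite H1, H2 in Hu, Hw.
  split; apply (Rmult_eq_reg_r (p * r - q * q)); auto; lra.
Qed.

(* The partial gradients in x and in v of (x, v) |-> a.L(x,v) + b.A(x,v) for fixed a and b,
   where m1 and m3 stand for mu / |x| and mu / |x|^3. *)
Definition LAgrad_x (x v a b : vec3) (m1 m3 : R) : vec3 :=
  vadd (vadd (cross v a) (vscale (dot v v) b))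
    (vadd (vscale (- dot b v) v) (vadd (vscale (- m1) b) (vscale (m3 * dot b x) x))).

Definition LAgrad_v (x v a b : vec3) : vec3 :=
  vadd (vadd (cross a x) (cross (cross x v) b))
       (vsub (vscale (dot b x) v) (vscale (dot x v) b)).

Lemma LAgrad_eq0_perp x v a b m1 m3 :
  m1 = m3 * dot x x -> m3 <> 0 -> cross x v <> vzero ->
  LAgrad_x x v a b m1 m3 = vzero -> LAgrad_v x v a b = vzero ->
  dot b x = 0 /\ dot b v = 0.
Proof.
  intros -> Hm3 HL Hgx Hgv.
  set (gx := LAgrad_x x v a b (m3 * dot x x) m3) in *.
  assert (HaL : dot a (cross x v) = 2 * dot x gx - dot v (LAgrad_v x v a b))
    by (unfold gx, LAgrad_x, LAgrad_v; vring).
  assert (Hx : dot v v * dot b x - dot x v * dot b v = dot x gx - dot a (cross x v))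
    by (unfold gx, LAgrad_x; vring).
  assert (Hv : m3 * (dot x v * dot b x - dot x x * dot b v) = dot v gx)
    by (unfold gx, LAgrad_x; vring).
  rewrite Hgx, Hgv in HaL. rewrite Hgx, HaL in Hx. rewrite Hgx in Hv.
  apply (cramer2_eq0 (dot v v) (dot x v) (dot x x)).
  - rewrite Hx. vring.
  - apply (Rmult_eq_reg_l m3); [rewrite Hv; vring | exact Hm3].
  - replace (dot v v * dot x x - dot x v * dot x v) with (dot (cross x v) (cross x v)) by vring.
    apply Rgt_not_eq, dot_gt0, HL.
Qed.

Lemma LAgrad_eq0_multiplier x v a b m1 m3 :
  m1 = m3 * dot x x -> m3 <> 0 -> cross x v <> vzero ->
  LAgrad_x x v a b m1 m3 = vzero -> LAgrad_v x v a b = vzero ->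
  exists l, b = vscale l (cross x v) /\
            a = vscale l (vsub (cross v (cross x v)) (vscale m1 x)).
Proof.
  intros Hm Hm3 HL Hgx Hgv.
  destruct (LAgrad_eq0_perp x v a b m1 m3 Hm Hm3 HL Hgx Hgv) as [Hbx Hbv].
  destruct (perp_parallel_cross b x v Hbx Hbv HL) as [l ->].
  exists l. split; [reflexivity|].
  apply vsub_eq0, (cross_eq0_indep _ x v); [| | exact HL].
  - rewrite <- Hgv. unfold LAgrad_v. vring.
  - transitivity (vscale (-1) (LAgrad_x x v a (vscale l (cross x v)) m1 m3));
      [unfold LAgrad_x; vring|].
    rewrite Hgx. vring.
Qed.

Lemma residuals_eq0_of_multiplier k1 k2 L A L0 A0 l :
  0 < k1 -> 0 < k2 -> dot L A = 0 -> dot L0 A0 = 0 -> L <> vzero ->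
  vscale k1 (vsub L L0) = vscale l A -> vscale k2 (vsub A A0) = vscale l L ->
  L = L0 /\ A = A0.
Proof.
  intros Hk1 Hk2 HLA H0 HL Ha Hb.
  assert (Hkey : l * (k1 * dot L L + k2 * dot A A) = (k1 * k2 + l * l) * dot L A
            - dot (vsub (vscale k1 L) (vscale l A)) (vsub (vscale k2 A) (vscale l L))) by vring.
  rewrite <- Ha, <- Hb, HLA in Hkey.
  replace (dot (vsub (vscale k1 L) (vscale k1 (vsub L L0)))
               (vsub (vscale k2 A) (vscale k2 (vsub A A0))))
    with (k1 * k2 * dot L0 A0) in Hkey by vring.
  rewrite H0 in Hkey.
  assert (Hl : l = 0).
  { pose proof (dot_gt0 L HL). pose proof (dot_ge0 A).
    apply (Rmult_eq_reg_r (k1 * dot L L + k2 * dot A A)); nra. }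
  subst l. split; apply vsub_eq0.
  - apply (vscale_eq0 k1); [rewrite Ha; vring | lra].
  - apply (vscale_eq0 k2); [rewrite Hb; vring | lra].
Qed.

Lemma Lmom_Alrl_orth mu x v : dot (Lmom x v) (Alrl mu x v) = 0.
Proof. unfold Alrl, Lmom. generalize (mu / vnorm x). intro. vring. Qed.

Lemma Vfun_dot mu k1 k2 L0 A0 x v : Vfun mu k1 k2 L0 A0 x v =
  k1 / 2 * dot (vsub (Lmom x v) L0) (vsub (Lmom x v) L0) +
  k2 / 2 * dot (vsub (Alrl mu x v) A0) (vsub (Alrl mu x v) A0).
Proof. unfold Vfun, vnorm. rewrite !pow2_sqrt; auto using dot_ge0. Qed.

Lemma Vfun_eq0_iff mu k1 k2 L0 A0 x v : 0 < k1 -> 0 < k2 ->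
  Vfun mu k1 k2 L0 A0 x v = 0 <-> Lmom x v = L0 /\ Alrl mu x v = A0.
Proof.
  intros Hk1 Hk2. rewrite Vfun_dot.
  pose proof (dot_ge0 (vsub (Lmom x v) L0)). pose proof (dot_ge0 (vsub (Alrl mu x v) A0)).
  split.
  - intro HV. split; apply vsub_eq0, dot_eq0; nra.
  - intros [-> ->]. vring.
Qed.

Lemma Lmom_neq0_of_Vfun_lt mu k1 k2 L0 A0 x v : 0 < k2 ->
  Vfun mu k1 k2 L0 A0 x v < k1 * vnorm L0 ^ 2 / 2 -> Lmom x v <> vzero.
Proof.
  intros Hk2 HV HL. rewrite Vfun_dot, HL in HV.
  unfold vnorm in HV. rewrite pow2_sqrt in HV by apply dot_ge0.
  replace (dot (vsub vzero L0) (vsub vzero L0)) with (dot L0 L0) in HV by vring.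
  pose proof (dot_ge0 (vsub (Alrl mu x v) A0)). nra.
Qed.

Definition Vgrad_x mu k1 k2 L0 A0 x v : vec3 :=
  LAgrad_x x v (vscale k1 (vsub (Lmom x v) L0)) (vscale k2 (vsub (Alrl mu x v) A0))
    (mu / vnorm x) (mu / vnorm x ^ 3).

Definition Vgrad_v mu k1 k2 L0 A0 x v : vec3 :=
  LAgrad_v x v (vscale k1 (vsub (Lmom x v) L0)) (vscale k2 (vsub (Alrl mu x v) A0)).

Lemma residuals_eq0_of_Vgrad_eq0 mu k1 k2 L0 A0 x v :
  0 < mu -> 0 < k1 -> 0 < k2 -> dot L0 A0 = 0 -> x <> vzero -> Lmom x v <> vzero ->
  Vgrad_x mu k1 k2 L0 A0 x v = vzero -> Vgrad_v mu k1 k2 L0 A0 x v = vzero ->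
  Lmom x v = L0 /\ Alrl mu x v = A0.
Proof.
  intros Hmu Hk1 Hk2 H0 Hx HL Hgx Hgv.
  assert (Hr : 0 < vnorm x) by apply sqrt_lt_R0, dot_gt0, Hx.
  assert (Hr2 : vnorm x ^ 2 = dot x x) by apply pow2_sqrt, dot_ge0.
  destruct (LAgrad_eq0_multiplier x v (vscale k1 (vsub (Lmom x v) L0))
              (vscale k2 (vsub (Alrl mu x v) A0)) (mu / vnorm x) (mu / vnorm x ^ 3))
    as [l [Hb Ha]]; try assumption.
  - rewrite <- Hr2. field. lra.
  - apply Rgt_not_eq, Rdiv_lt_0_compat; [exact Hmu | apply pow_lt, Hr].
  - exact (residuals_eq0_of_multiplier k1 k2 _ _ L0 A0 l Hk1 Hk2
             (Lmom_Alrl_orth mu x v) H0 HL Ha Hb).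
Qed.

Lemma Vgrad_eq0_of_residuals_eq0 mu k1 k2 L0 A0 x v :
  Lmom x v = L0 -> Alrl mu x v = A0 ->
  Vgrad_x mu k1 k2 L0 A0 x v = vzero /\ Vgrad_v mu k1 k2 L0 A0 x v = vzero.
Proof.
  intros HL HA. unfold Vgrad_x, Vgrad_v, LAgrad_x, LAgrad_v. rewrite HL, HA.
  generalize (mu / vnorm x) (mu / vnorm x ^ 3). intros. split; vring.
Qed.

Lemma is_derive_Vfun_line mu k1 k2 L0 A0 x v dx dv t0 :
  x <> vzero ->
  is_derive (fun t => Vfun mu k1 k2 L0 A0 (vadd x (vscale (t - t0) dx))
                                         (vadd v (vscale (t - t0) dv))) t0
    (dot (Vgrad_x mu k1 k2 L0 A0 x v) dx + dot (Vgrad_v mu k1 k2 L0 A0 x v) dv).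
Proof.
  intro Hx. apply dot_gt0 in Hx.
  eapply is_derive_ext. { intro t. symmetry. apply Vfun_dot. }
  destruct x as [x1 x2 x3], v as [y1 y2 y3], dx as [d1 d2 d3], dv as [e1 e2 e3],
    L0 as [l1 l2 l3], A0 as [c1 c2 c3].
  unfold Vgrad_x, Vgrad_v, LAgrad_x, LAgrad_v, Lmom, Alrl, vnorm, dot, vadd, vsub, vscale,
    cross in *; simpl in *.
  auto_derive.
  all: rewrite Rplus_opp_r, !Rmult_0_l, !Rplus_0_r.
  { repeat split; try apply Rgt_not_eq, sqrt_lt_R0; lra. }
  set (r := sqrt (x1*x1+x2*x2+x3*x3)).
  assert (Hr : 0 < r) by (apply sqrt_lt_R0; lra).
  assert (Hr2 : r * r = x1*x1+x2*x2+x3*x3) by (apply sqrt_sqrt; lra).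
  field. lra.
Qed.

Definition kron (i j : nat) : R := if Nat.eqb i j then 1 else 0.
Definition unit_x (i : nat) : vec3 := mkV (kron 0 i) (kron 1 i) (kron 2 i).
Definition unit_v (i : nat) : vec3 := mkV (kron 3 i) (kron 4 i) (kron 5 i).

Lemma coords6_upd F x v i t : (i < 6)%nat ->
  coords6 F (upd (pt6 x v) i t) =
  F (vadd x (vscale (t - pt6 x v i) (unit_x i))) (vadd v (vscale (t - pt6 x v i) (unit_v i))).
Proof.
  intro Hi. destruct x, v. unfold coords6, upd, unit_x, unit_v, kron, vadd, vscale.
  do 6 (destruct i as [|i]; [simpl; f_equal; f_equal; ring|]). lia.
Qed.

Lemma partial_derivative_Vfun mu k1 k2 L0 A0 x v i : x <> vzero -> (i < 6)%nat ->
  derivable_pt_lim (fun t => coords6 (Vfun mu k1 k2 L0 A0) (upd (pt6 x v) i t)) (pt6 x v i)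
    (dot (Vgrad_x mu k1 k2 L0 A0 x v) (unit_x i) + dot (Vgrad_v mu k1 k2 L0 A0 x v) (unit_v i)).
Proof.
  intros Hx Hi. apply is_derive_Reals.
  eapply is_derive_ext; [intro t; symmetry; exact (coords6_upd _ x v i t Hi)|].
  apply is_derive_Vfun_line, Hx.
Qed.

Lemma grad6_eq0_iff g h :
  (forall i, (i < 6)%nat -> dot g (unit_x i) + dot h (unit_v i) = 0) <->
  g = vzero /\ h = vzero.
Proof.
  split.
  - intro H. destruct g, h.
    pose proof (H 0%nat ltac:(lia)). pose proof (H 1%nat ltac:(lia)).
    pose proof (H 2%nat ltac:(lia)). pose proof (H 3%nat ltac:(lia)).
    pose proof (H 4%nat ltac:(lia)). pose proof (H 5%nat ltac:(lia)).
    unfold dot, unit_x, unit_v, kron, vzero in *; simpl in *.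
    split; f_equal; lra.
  - intros [-> ->] i _. vring.
Qed.

Lemma critical_point_Vfun_iff mu k1 k2 L0 A0 x v : x <> vzero ->
  critical_point (Vfun mu k1 k2 L0 A0) x v <->
  Vgrad_x mu k1 k2 L0 A0 x v = vzero /\ Vgrad_v mu k1 k2 L0 A0 x v = vzero.
Proof.
  intro Hx. rewrite <- grad6_eq0_iff. split.
  - intros Hcrit i Hi. symmetry.
    exact (uniqueness_limite _ _ _ _ (Hcrit i Hi) (partial_derivative_Vfun mu k1 k2 L0 A0 x v i Hx Hi)).
  - intros Hg i Hi. rewrite <- (Hg i Hi). exact (partial_derivative_Vfun mu k1 k2 L0 A0 x v i Hx Hi).
Qed.

Theorem lemma7 (mu k1 k2 : R) (L0 A0 : vec3) (c : R) :
  0 < mu -> 0 < k1 -> 0 < k2 ->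
  dot L0 A0 = 0 -> L0 <> vzero -> vnorm A0 < mu ->
  0 < c ->
  c < Rmin (k1 * (vnorm L0) ^ 2 / 2) (k2 * (mu - vnorm A0) ^ 2 / 2) ->
  forall x v : vec3, x <> vzero ->
    ((critical_point (Vfun mu k1 k2 L0 A0) x v /\
      0 <= Vfun mu k1 k2 L0 A0 x v <= c)
     <-> Vfun mu k1 k2 L0 A0 x v = 0)
    /\ (Vfun mu k1 k2 L0 A0 x v = 0 <-> (Lmom x v = L0 /\ Alrl mu x v = A0)).
Proof.
  intros Hmu Hk1 Hk2 H0 _ _ Hc Hcmin x v Hx.
  pose proof (Vfun_eq0_iff mu k1 k2 L0 A0 x v Hk1 Hk2) as Hmin.
  split; [|exact Hmin].
  rewrite (critical_point_Vfun_iff _ _ _ _ _ _ _ Hx), Hmin. split.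
  - intros [[Hgx Hgv] [_ HVc]].
    apply residuals_eq0_of_Vgrad_eq0 with k1 k2; try assumption.
    apply (Lmom_neq0_of_Vfun_lt mu k1 k2 L0 A0 x v Hk2).
    pose proof (Rmin_l (k1 * vnorm L0 ^ 2 / 2) (k2 * (mu - vnorm A0) ^ 2 / 2)). lra.
  - intros [HL HA]. split; [exact (Vgrad_eq0_of_residuals_eq0 _ _ _ _ _ _ _ HL HA)|].
    rewrite (proj2 Hmin (conj HL HA)). lra.
Qed.
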